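(* Let $\tau$ be any substitution and let $g=(v,aub,w)$ be a generator for $\tau$ whose center has at least two letters, where $v,w\in\mathcal{A}^+$, $u\in\mathcal{A}^*$ and $a,b\in\mathcal{A}$. Then $g$ is basic if and only if $|\tau(a)|>|v|$ and $|\tau(b)|>|w|$.
   Context: Let $\mathcal{A}$ be a finite nonempty alphabet, $\mathcal{A}^*$ the finite words over $\mathcal{A}$ (including the empty word), $\mathcal{A}^+$ the nonempty words, $|u|$ the length of $u$. A word $u$ is a factor of $v$ if $v=w_1uw_2$ for some words $w_1,w_2$. A substitution is a map $\tau:\mathcal{A}\to\mathcal{A}^+$ extended to a concatenation-respecting map on words. The language $\mathcal{L}(\tau)$ is the set of words that are factors of $\tau^n(a)$ for some letter $a$ and some $n\ge1$. A generator for $\tau$ is a triple $(v,u,w)$ with $v,u,w\in\mathcal{A}^+$, $u\in\mathcal{L}(\tau)$ and $\tau(u)=vuw$; $v$, $u$, $w$ are its left wing, center and right wing, and its length is $|u|$. If $(v,u,cw)$ is a generator with $c\in\mathcal{A}$, $w\in\mathcal{A}^*$, its right extension is the generator $(v,uc,w\tau(c))$; if $(vc,u,w)$ is a generator with $c\in\mathcal{A}$, $v\in\mathcal{A}^*$, its left extension is the generator $(\tau(c)v,cu,w)$. Two generators $g_1,g_2$ are G related ($g_1\sim_G g_2$) if there is a generator $g_3$ obtainable from $g_1$ and also from $g_2$ by finite (possibly empty) sequences of left and right extensions. A generator is basic if it is not G related to any generator of smaller length. *)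

From mathcomp Require Import all_boot.
Set Implicit Arguments. Unset Strict Implicit. Unset Printing Implicit Defensive.

Definition is_substitution (A : finType) (tau : A -> seq A) : Prop :=
  forall a : A, tau a <> [::].

Definition subst_word (A : finType) (tau : A -> seq A) (w : seq A) : seq A :=
  flatten (map tau w).

Definition factor (A : finType) (u v : seq A) : Prop :=
  exists w1 w2 : seq A, v = w1 ++ u ++ w2.

Definition in_lang (A : finType) (tau : A -> seq A) (u : seq A) : Prop :=
  exists (a : A) (n : nat), 1 <= n /\ factor u (iter n (subst_word tau) [:: a]).

(* a triple (v, u, w) : left wing, center, right wing *)
Definition triple (A : finType) := (seq A * seq A * seq A)%type.

Definition is_generator (A : finType) (tau : A -> seq A) (g : triple A) : Prop :=
  let: (v, u, w) := g in
  [/\ v <> [::], u <> [::], w <> [::], in_lang tau u &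
      subst_word tau u = v ++ u ++ w].

Definition gen_length (A : finType) (g : triple A) : nat := size g.1.2.

Inductive ext_step (A : finType) (tau : A -> seq A) : triple A -> triple A -> Prop :=
| right_ext (v u : seq A) (c : A) (w : seq A) :
    ext_step tau (v, u, c :: w) (v, rcons u c, w ++ tau c)
| left_ext (v : seq A) (c : A) (u w : seq A) :
    ext_step tau (rcons v c, u, w) (tau c ++ v, c :: u, w).

Inductive ext_star (A : finType) (tau : A -> seq A) : triple A -> triple A -> Prop :=
| ext_refl g : ext_star tau g g
| ext_cons g1 g2 g3 : ext_step tau g1 g2 -> ext_star tau g2 g3 -> ext_star tau g1 g3.

Definition G_related (A : finType) (tau : A -> seq A) (g1 g2 : triple A) : Prop :=
  is_generator tau g1 /\ is_generator tau g2 /\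
  exists g3 : triple A, ext_star tau g1 g3 /\ ext_star tau g2 g3.

Definition is_basic (A : finType) (tau : A -> seq A) (g : triple A) : Prop :=
  is_generator tau g /\
  ~ (exists g' : triple A, is_generator tau g' /\ G_related tau g g' /\
                           gen_length g' < gen_length g).

(* If |tau(a)| <= |v|, then v = tau(a) v' and (v' a, u b, w) is a shorter
   generator whose left extension is g; symmetrically on the right.
   Conversely, extending a generator by x on the left and y on the right
   lengthens its wings by |tau(x)| - |x| >= 0 and |tau(y)| - |y| >= 0.  If g
   and a shorter generator g' have a common extension, the extension of g'
   overhangs that of g on one side, say by a word a z on the left; comparing
   left wings gives |tau(a)| + |v'| <= |v| + 1, hence |tau(a)| <= |v| as v'
   is nonempty. *)

From mathcomp Require Import all_boot zify.

Set Implicit Arguments.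
Unset Strict Implicit.
Unset Printing Implicit Defensive.

Section Words.
Variable A : eqType.

Lemma cat_prefix_split (p q r t : seq A) :
  p ++ q = r ++ t -> size p <= size r -> exists2 m, r = p ++ m & q = m ++ t.
Proof.
elim: p r => [|c p IHp] r /=; first by exists r.
case: r => [|d r] //= [<- /IHp IH] /IH [m -> ->].
by exists m.
Qed.

End Words.

Section Generators.
Variables (A : finType) (tau : A -> seq A).
Local Notation S := (subst_word tau).

Lemma subst_word_cat s t : S (s ++ t) = S s ++ S t.
Proof. by rewrite /subst_word map_cat flatten_cat. Qed.

Lemma subst_word_cons c s : S (c :: s) = tau c ++ S s.
Proof. by []. Qed.

Lemma subst_word1 c : S [:: c] = tau c.
Proof. exact: cats0. Qed.

Lemma leq_size_subst_word s : is_substitution tau -> size s <= size (S s).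
Proof.
move=> tau_nonempty; elim: s => [|c s IHs] //.
rewrite subst_word_cons size_cat /=; suff : 0 < size (tau c) by lia.
by rewrite lt0n size_eq0; apply/eqP/tau_nonempty.
Qed.

Lemma in_lang_factor u u' : in_lang tau u -> factor u' u -> in_lang tau u'.
Proof.
move=> [c [n [n_gt0 [w1 [w2 img]]]]] [z1 [z2 def_u]].
by exists c, n; split => //; exists (w1 ++ z1), (z2 ++ w2); rewrite img def_u -!catA.
Qed.

Lemma ext_step_not_basic g' g :
  is_generator tau g' -> ext_step tau g' g -> ~ is_basic tau g.
Proof.
move=> gen_g' step [gen_g]; apply; exists g'; split => //; split.
  split => //; split => //; exists g; split; first exact: ext_refl.
  by apply: ext_cons step _; apply: ext_refl.
by case: step => *; rewrite /gen_length /= ?size_rcons.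
Qed.

Lemma left_shrink v c s w :
  s <> [::] -> is_generator tau (v, c :: s, w) -> size (tau c) <= size v ->
  exists2 g', is_generator tau g' & ext_step tau g' (v, c :: s, w).
Proof.
move=> s_nonempty [v_nonempty _ w_nonempty lang_cs img] le_v.
rewrite subst_word_cons in img.
have [m def_v img_s] := cat_prefix_split img le_v.
exists (rcons m c, s, w); last by rewrite def_v; apply: left_ext.
split => //; first by case: (m).
  by apply: (in_lang_factor (u' := s) lang_cs); exists [:: c], [::]; rewrite cats0.
by rewrite img_s cat_rcons.
Qed.

Lemma right_shrink v s c w :
  s <> [::] -> is_generator tau (v, s ++ [:: c], w) -> size (tau c) <= size w ->
  exists2 g', is_generator tau g' & ext_step tau g' (v, s ++ [:: c], w).
Proof.
move=> s_nonempty [v_nonempty _ w_nonempty lang_sc img] le_w.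
rewrite subst_word_cat subst_word1 catA in img.
have le_prefix : size (v ++ s ++ [:: c]) <= size (S s).
  by move/(congr1 size): img; rewrite !size_cat; lia.
have [m img_s def_w] := cat_prefix_split (esym img) le_prefix.
exists (v, s, c :: m); last by rewrite def_w cats1; apply: right_ext.
split => //.
  by apply: (in_lang_factor (u' := s) lang_sc); exists [::], [:: c].
by rewrite img_s -!catA.
Qed.

(* Each wing grows by |tau(x)| - |x| (resp. |tau(y)| - |y|), stated additively
   to avoid truncated subtraction. *)
Definition extended_by (g g3 : triple A) (x y : seq A) : Prop :=
  [/\ g3.1.2 = x ++ g.1.2 ++ y,
      size g3.1.1 + size x = size (S x) + size g.1.1 &
      size g3.2 + size y = size (S y) + size g.2].

Lemma ext_star_extended_by g g3 :
  ext_star tau g g3 -> exists x y, extended_by g g3 x y.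
Proof.
elim=> [g0 | g1 g2 {}g3 step _ [x [y [center wl wr]]]].
  by exists [::], [::]; split; rewrite /= ?cats0 ?addn0.
case: step center wl wr => [v u c w | v c u w] /= center wl wr.
- exists x, (c :: y); split => //; first by rewrite center cat_rcons.
  by move: wr; rewrite subst_word_cons !size_cat /=; lia.
- exists (x ++ [:: c]), y; split => //; first by rewrite center -catA.
  by move: wl; rewrite subst_word_cat subst_word1 !size_cat size_rcons /=; lia.
Qed.

Hypothesis tau_nonempty : is_substitution tau.

Lemma extended_by_left_overhang v a s w g' g3 x y x' y' :
  extended_by (v, a :: s, w) g3 x y -> extended_by g' g3 x' y' ->
  size x < size x' -> size (tau a) + size g'.1.1 <= (size v).+1.
Proof.
move=> [center wl _] [center' wl' _] lt_x.
have centers : (x ++ [:: a]) ++ s ++ y = x' ++ g'.1.2 ++ y'.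
  by rewrite -center' center /= -catA.
have le_prefix : size (x ++ [:: a]) <= size x' by rewrite size_cat addn1.
have [m def_x' _] := cat_prefix_split centers le_prefix.
move: wl wl'; rewrite def_x' !subst_word_cat subst_word1 !size_cat /=.
have := leq_size_subst_word m tau_nonempty; lia.
Qed.

Lemma extended_by_right_overhang v s b w g' g3 x y x' y' :
  extended_by (v, s ++ [:: b], w) g3 x y -> extended_by g' g3 x' y' ->
  size y < size y' -> size (tau b) + size g'.2 <= (size w).+1.
Proof.
move=> [center _ wr] [center' _ wr'] lt_y.
have centers : (x' ++ g'.1.2) ++ y' = (x ++ s) ++ b :: y.
  by rewrite -catA -center' center /= -!catA.
have le_prefix : size (x' ++ g'.1.2) <= size (x ++ s).
  by move/(congr1 size): centers; rewrite !size_cat /=; lia.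
have [m _ def_y'] := cat_prefix_split centers le_prefix.
move: wr wr'; rewrite def_y' !subst_word_cat subst_word_cons !size_cat /=.
have := leq_size_subst_word m tau_nonempty; lia.
Qed.

Lemma basic_of_short_wings v a u b w :
  is_generator tau (v, a :: u ++ [:: b], w) ->
  size v < size (tau a) -> size w < size (tau b) ->
  is_basic tau (v, a :: u ++ [:: b], w).
Proof.
move=> gen lt_v lt_w; split => //.
case=> [[[v' u'] w'] [[v'_nonempty _ w'_nonempty _ _] [[_ [_ [g3 [ext ext']]]]]]].
rewrite /gen_length /= size_cat /= => shorter.
have [x [y ext_by]] := ext_star_extended_by ext.
have [x' [y' ext_by']] := ext_star_extended_by ext'.
have [center _ _] := ext_by; have [center' _ _] := ext_by'.
have /(congr1 size) := etrans (esym center) center'.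
rewrite !size_cat /= size_cat /= => sizes.
have v'_pos : 0 < size v' by case: (v') v'_nonempty.
have w'_pos : 0 < size w' by case: (w') w'_nonempty.
have [lt_x | le_x] := ltnP (size x) (size x').
  have := extended_by_left_overhang ext_by ext_by' lt_x; rewrite /=; lia.
have lt_y : size y < size y' by lia.
have := extended_by_right_overhang (s := a :: u) ext_by ext_by' lt_y.
rewrite /=; lia.
Qed.

End Generators.

Theorem mainTheorem2 (A : finType) (tau : A -> seq A) (v u w : seq A) (a b : A) :
  is_substitution tau ->
  is_generator tau (v, a :: u ++ [:: b], w) ->
  (is_basic tau (v, a :: u ++ [:: b], w) <->
   size v < size (tau a) /\ size w < size (tau b)).
Proof.
move=> tau_nonempty gen; split; last by case; apply: basic_of_short_wings.
move=> basic; rewrite !ltnNge; split; apply/negP => le_wing.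
- have ub_nonempty : u ++ [:: b] <> [::] by case: (u).
  have [g' gen' step] := left_shrink ub_nonempty gen le_wing.
  exact: ext_step_not_basic gen' step basic.
- have au_nonempty : a :: u <> [::] by [].
  have [g' gen' step] := right_shrink au_nonempty gen le_wing.
  exact: ext_step_not_basic gen' step basic.
Qed.
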